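(* Let $A\in\mathbb{R}^{m\times n}$ with $AA^{\top}$ invertible, let $0<x_{\min}\le x_{\max}$, and let $\boldsymbol x_o,\hat{\boldsymbol x},\tilde{\boldsymbol x}\in\mathbb{R}^n$ have all entries in $[x_{\min},x_{\max}]$. Put $X_o=\mathrm{diag}(\boldsymbol x_o)$, $\hat X=\mathrm{diag}(\hat{\boldsymbol x})$, $\tilde X=\mathrm{diag}(\tilde{\boldsymbol x})$, $\Sigma_o=(AX_o^2A^{\top})^{-1}$, $\hat\Sigma=(A\hat X^2A^{\top})^{-1}$, $\tilde\Sigma=(A\tilde X^2A^{\top})^{-1}$. Then every eigenvalue $\lambda_i$ of $\Sigma_o^{-1/2}(\hat\Sigma-\tilde\Sigma)\Sigma_o^{-1/2}$ satisfies $$|\lambda_i|\le \frac{x_{\max}^2\,\lambda_{\max}^2(AA^{\top})\,\|\hat{\boldsymbol x}^2-\tilde{\boldsymbol x}^2\|_\infty}{x_{\min}^4\,\lambda_{\min}^2(AA^{\top})}.$$ Furthermore, for any $\sigma_w>0$ and any vectors $\boldsymbol w_1,\dots,\boldsymbol w_L\in\mathbb{R}^n$, with $\boldsymbol y_\ell=AX_o\boldsymbol w_\ell$, $$\Big|\frac1{L\sigma_w^2}\sum_{\ell=1}^L\boldsymbol y_\ell^{\top}(\hat\Sigma-\tilde\Sigma)\boldsymbol y_\ell\Big|\le \frac{x_{\max}^2\,\lambda_{\max}^2(AA^{\top})\,\|\hat{\boldsymbol x}^2-\tilde{\boldsymbol x}^2\|_\infty}{x_{\min}^4\,\lambda_{\min}^2(AA^{\top})}\Big(1+\frac1{L\sigma_w^2}\sum_{\ell=1}^L\boldsymbol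 w_\ell^{\top}\boldsymbol w_\ell\Big).$$
   Context: For a vector $\boldsymbol x$, $\boldsymbol x^2$ denotes the entrywise square; $\lambda_{\max},\lambda_{\min}$ denote largest and smallest eigenvalues; $\Sigma_o^{-1/2}$ is the symmetric square root of $\Sigma_o^{-1}=AX_o^2A^{\top}$ inverted appropriately (i.e. $(AX_o^2A^{\top})^{1/2}$). *)

From mathcomp Require Import all_boot all_order all_algebra.
From mathcomp Require Import reals.
Set Implicit Arguments. Unset Strict Implicit. Unset Printing Implicit Defensive.
Import Order.TTheory GRing.Theory Num.Theory.
Local Open Scope ring_scope.

Section Defs.
Variable R : realType.

Definition diagv n (x : 'cV[R]_n) : 'M[R]_n := diag_mx x^T.

Definition sqv n (x : 'cV[R]_n) : 'cV[R]_n := \col_i (x i 0 ^+ 2).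

Definition inftynorm n (x : 'cV[R]_n) : R := \big[Num.max/0]_(i < n) `|x i 0|.

Definition qform m (M : 'M[R]_m) (y : 'cV[R]_m) : R := (y^T *m M *m y) 0 0.

Definition psd m (M : 'M[R]_m) : Prop := forall v : 'cV[R]_m, 0 <= qform M v.

Definition is_lmax m (M : 'M[R]_m) (lam : R) : Prop :=
  eigenvalue M lam /\ forall a, eigenvalue M a -> a <= lam.
Definition is_lmin m (M : 'M[R]_m) (lam : R) : Prop :=
  eigenvalue M lam /\ forall a, eigenvalue M a -> lam <= a.

Definition Sigma m n (A : 'M[R]_(m, n)) (x : 'cV[R]_n) : 'M[R]_m :=
  invmx (A *m diagv x *m diagv x *m A^T).
End Defs.

(* Write G(x) = A diag(x^2) A^T, so that Sigma(x) = G(x)^-1. The Rayleigh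
   bounds for A A^T give xmin^2 lmin |p|^2 <= p G(x) p^T <= xmax^2 lmax |p|^2,
   hence |u Sigma(x)|^2 <= |u|^2 / (xmin^2 lmin)^2. The resolvent identity
   Sigma(xh) - Sigma(xt) = Sigma(xh) A diag(xt^2 - xh^2) A^T Sigma(xt), together
   with 2ab <= a^2 + b^2, then gives
     |u (Sigma(xh) - Sigma(xt)) u^T| <= |xh^2 - xt^2|_oo lmax |u|^2 / (xmin^2 lmin)^2.
   Both claims follow by taking u = v S, where |v S|^2 = v G(xo) v^T, and
   u = y^T = (X_o w)^T A^T, where |A z|^2 <= lmax |z|^2. *)

From mathcomp Require Import all_boot all_order all_algebra.
From mathcomp Require Import reals complex.
From mathcomp Require Import ring lra.
Set Implicit Arguments. Unset Strict Implicit. Unset Printing Implicit Defensive.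
Import Order.TTheory GRing.Theory Num.Theory.
Local Open Scope ring_scope.

Section SquaredNorm.
Variable R : realFieldType.
Implicit Types (k : nat) (t : R).

Definition sqnorm k (u : 'rV[R]_k) : R := (u *m u^T) 0 0.

Lemma mulmx_trE k (u v : 'rV[R]_k) : (u *m v^T) 0 0 = \sum_j u 0 j * v 0 j.
Proof. by rewrite mxE; apply: eq_bigr => j _; rewrite mxE. Qed.

Lemma sqnormE k (u : 'rV[R]_k) : sqnorm u = \sum_j u 0 j ^+ 2.
Proof. by rewrite /sqnorm mulmx_trE; apply: eq_bigr => j _; rewrite expr2. Qed.

Lemma sqnorm_ge0 k (u : 'rV[R]_k) : 0 <= sqnorm u.
Proof. by rewrite sqnormE sumr_ge0 // => j _; rewrite sqr_ge0. Qed.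

Lemma sqnorm_gt0 k (u : 'rV[R]_k) : u != 0 -> 0 < sqnorm u.
Proof.
apply: contraNT; rewrite -leNgt sqnormE => sum_le0; apply/eqP/rowP => j.
have sum_eq0 : \sum_j u 0 j ^+ 2 = 0.
  by apply/eqP; rewrite eq_le sum_le0 -sqnormE sqnorm_ge0.
have /(_ j isT) u2_eq0 := psumr_eq0P (fun i _ => sqr_ge0 (u 0 i)) sum_eq0.
by rewrite mxE; apply/eqP; rewrite -sqrf_eq0 u2_eq0.
Qed.

Lemma sqnorm_mulmx k1 k2 (B : 'M[R]_(k1, k2)) (p : 'rV_k1) :
  sqnorm (p *m B) = (p *m (B *m B^T) *m p^T) 0 0.
Proof. by rewrite /sqnorm trmx_mul !mulmxA. Qed.

Lemma mulr_le_amgm t (x y : R) : 0 < t -> 2 * (x * y) <= t * x ^+ 2 + y ^+ 2 / t.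
Proof.
move=> t_gt0; rewrite -subr_ge0.
have -> : t * x ^+ 2 + y ^+ 2 / t - 2 * (x * y) = (t * x - y) ^+ 2 / t.
  by field; rewrite gt_eqF.
by rewrite divr_ge0 ?sqr_ge0 ?ltW.
Qed.

Lemma mulmx_tr_le_amgm k t (u v : 'rV[R]_k) : 0 < t ->
  2 * (u *m v^T) 0 0 <= t * sqnorm u + sqnorm v / t.
Proof.
move=> t_gt0; rewrite mulmx_trE !sqnormE mulr_sumr !mulr_sumr mulr_suml -big_split.
by apply: ler_sum => j _; exact: mulr_le_amgm.
Qed.

Lemma sqnorm_le_mulmx_tr k t (u p : 'rV[R]_k) : 0 < t ->
  t * sqnorm p <= (u *m p^T) 0 0 -> sqnorm p <= sqnorm u / t ^+ 2.
Proof.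
move=> t_gt0 le_p_up.
have := mulmx_tr_le_amgm u p (_ : 0 < t^-1); rewrite invr_gt0 => /(_ t_gt0).
rewrite invrK => amgm.
have le_tp : t * sqnorm p <= t^-1 * sqnorm u by lra.
rewrite ler_pdivlMr ?exprn_gt0 // mulrC expr2 -mulrA.
by rewrite -ler_pdivlMl // mulrC.
Qed.

Lemma sqnorm_mul_trmx_le k1 k2 (c : R) (B : 'M[R]_(k1, k2)) : 0 < c ->
  (forall p, sqnorm (p *m B) <= c * sqnorm p) ->
  forall z, sqnorm (z *m B^T) <= c * sqnorm z.
Proof.
move=> c_gt0 B_le z; set r := z *m B^T.
(* Cauchy-Schwarz in AM-GM form: |r|^2 = <r B, z> <= |r B|^2 / 2c + c |z|^2 / 2. *)
have rE : sqnorm r = ((r *m B) *m z^T) 0 0 by rewrite /sqnorm {2}/r trmx_mul trmxK mulmxA.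
have := mulmx_tr_le_amgm (r *m B) z (_ : 0 < c^-1).
rewrite invr_gt0 invrK -rE => /(_ c_gt0).
have : c^-1 * sqnorm (r *m B) <= sqnorm r.
  by rewrite ler_pdivrMl // B_le.
lra.
Qed.

Lemma diag_formE k (a b d : 'rV[R]_k) :
  (a *m diag_mx d *m b^T) 0 0 = \sum_j a 0 j * d 0 j * b 0 j.
Proof. by rewrite mul_mx_diag mulmx_trE; apply: eq_bigr => j _; rewrite mxE. Qed.

Lemma diag_form_ge k t (a d : 'rV[R]_k) : (forall j, t <= d 0 j) ->
  t * sqnorm a <= (a *m diag_mx d *m a^T) 0 0.
Proof.
move=> d_ge; rewrite diag_formE sqnormE mulr_sumr; apply: ler_sum => j _.
by rewrite mulrAC -expr2 [t * _]mulrC; apply: ler_wpM2l; rewrite ?sqr_ge0.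
Qed.

Lemma diag_form_le k t (a d : 'rV[R]_k) : (forall j, d 0 j <= t) ->
  (a *m diag_mx d *m a^T) 0 0 <= t * sqnorm a.
Proof.
move=> d_le; rewrite diag_formE sqnormE mulr_sumr; apply: ler_sum => j _.
by rewrite mulrAC -expr2 [t * _]mulrC; apply: ler_wpM2l; rewrite ?sqr_ge0.
Qed.

Lemma diag_form_norm_le k t (a b d : 'rV[R]_k) : (forall j, `|d 0 j| <= t) ->
  `|(a *m diag_mx d *m b^T) 0 0| <= t / 2 * (sqnorm a + sqnorm b).
Proof.
move=> d_le; rewrite diag_formE; apply: le_trans (ler_norm_sum _ _ _) _.
rewrite !sqnormE -big_split mulr_sumr; apply: ler_sum => j _.
have t_ge0 : 0 <= t by apply: le_trans (d_le j).
have := mulr_le_amgm `|a 0 j| `|b 0 j| ltr01.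
rewrite mul1r divr1 !real_normK ?num_real // => amgm.
rewrite mulrAC !normrM; apply: le_trans (_ : t * (`|a 0 j| * `|b 0 j|) <= _).
  by rewrite mulrC; apply: ler_wpM2r; rewrite ?mulr_ge0.
rewrite -mulrA; apply: ler_wpM2l => //.
by rewrite ler_pdivlMl.
Qed.

Lemma coercive_unitmx k t (P : 'M[R]_k) : 0 < t ->
  (forall p, t * sqnorm p <= (p *m P *m p^T) 0 0) -> P \in unitmx.
Proof.
move=> t_gt0 P_ge; rewrite -row_free_unit -kermx_eq0; apply: contraT.
case/rowV0Pn => p /sub_kermxP pP0 p_neq0.
by have := P_ge p; rewrite pP0 mul0mx mxE leNgt mulr_gt0 ?sqnorm_gt0.
Qed.

Lemma sqnorm_mul_invmx_le k t (P : 'M[R]_k) : 0 < t ->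
  (forall p, t * sqnorm p <= (p *m P *m p^T) 0 0) ->
  forall u, sqnorm (u *m invmx P) <= sqnorm u / t ^+ 2.
Proof.
move=> t_gt0 P_ge u; apply: sqnorm_le_mulmx_tr => //.
apply: le_trans (P_ge _) _; by rewrite mulmxKV ?(coercive_unitmx t_gt0 P_ge).
Qed.

End SquaredNorm.

Section NormalForm.
Variable C : numClosedFieldType.
Local Open Scope sesquilinear_scope.

Lemma eigenvalue_spectral_diag n (A : 'M[C]_n) j :
  A \is normalmx -> eigenvalue A (spectral_diag A 0 j).
Proof.
move=> /orthomx_spectralP; have U_unit := spectral_unit A.
set U := spectralmx A; set d := spectral_diag A => A_eq.
apply/eigenvalueP; exists (delta_mx 0 j *m U).
  by rewrite A_eq !mulmxA mulmxK // -[_ *m diag_mx d]rowE row_diag_mx -scalemxAl.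
rewrite mulmx_free_eq0 ?row_free_unit //; apply/eqP => /rowP/(_ j).
by rewrite !mxE !eqxx; apply/eqP; exact: oner_neq0.
Qed.

Lemma normalmx_form_le n (A : 'M[C]_n) (h : C) : A \is normalmx ->
  (forall j, spectral_diag A 0 j <= h) ->
  forall v : 'rV_n, (v *m A *m v ^t*) 0 0 <= h * (v *m v ^t*) 0 0.
Proof.
move=> /orthomx_spectralP A_eq d_le v; set U := spectralmx A.
have U_unitary : U \is unitarymx := spectral_unitarymx A.
set z := v *m U ^t*.
have zC : z ^t* = U *m v ^t*.
  by rewrite /z trmx_mul map_mxM trmxCK.
have -> : v *m A *m v ^t* = z *m diag_mx (spectral_diag A) *m z ^t*.
  by rewrite zC {1}A_eq invmx_unitary // !mulmxA.
have -> : v *m v ^t* = z *m z ^t*.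
  by rewrite zC /z mulmxA mulmxKtV.
rewrite mul_mx_diag !mxE mulr_sumr; apply: ler_sum => j _.
rewrite !mxE mulrAC [h * _]mulrC; apply: ler_wpM2l; first exact: mul_conjC_ge0.
exact: d_le.
Qed.

End NormalForm.

(* The spectral theorem is only available over a numClosedFieldType, so a real
   symmetric matrix is handled through its image in R[i]. *)
Section Rayleigh.
Variable R : rcfType.
Local Open Scope sesquilinear_scope.
Local Notation toC := (real_complex R).

Lemma real_complex_real (x : R) : toC x \is Num.real.
Proof. by rewrite realE -[0 : R[i]]/(toC 0) !lecR le_total. Qed.

Lemma real_complexRe (c : R[i]) : c \is Num.real -> c = toC (complex.Re c).
Proof.
case: c => a b; rewrite realE !lecE /= => /orP[] /andP[] /eqP b0 _.
- by rewrite b0.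
- by rewrite -b0.
Qed.

Lemma map_real_complex_trC k1 k2 (B : 'M[R]_(k1, k2)) :
  (map_mx toC B) ^t* = map_mx toC B^T.
Proof. by apply/matrixP => i j; rewrite !mxE; exact/CrealP/real_complex_real. Qed.

Lemma rayleigh_le m (P : 'M[R]_m) (hi : R) : P^T = P ->
  (forall a, eigenvalue P a -> a <= hi) ->
  forall v : 'rV_m, (v *m P *m v^T) 0 0 <= hi * sqnorm v.
Proof.
move=> P_sym P_ev v; set Pc := map_mx toC P.
have Pc_herm : Pc \is hermsymmx.
  apply: realsym_hermsym; last by apply/mxOverP => i j; rewrite mxE real_complex_real.
  apply/is_hermitianmxP; rewrite expr0 scale1r map_mx_id //.
  by rewrite /Pc map_trmx P_sym.
have Pc_normal := hermitian_normalmx Pc_herm.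
have d_le j : spectral_diag Pc 0 j <= toC hi.
  have d_real : spectral_diag Pc 0 j \is Num.real.
    exact: mxOverP (hermitian_spectral_diag_real Pc_herm) 0 j.
  have := eigenvalue_spectral_diag j Pc_normal.
  by rewrite (real_complexRe d_real) eigenvalue_map lecR; exact: P_ev.
have := normalmx_form_le Pc_normal d_le (map_mx toC v).
by rewrite /sqnorm map_real_complex_trC -!map_mxM !mxE -rmorphM lecR.
Qed.

Lemma rayleigh_ge m (P : 'M[R]_m) (lo : R) : P^T = P ->
  (forall a, eigenvalue P a -> lo <= a) ->
  forall v : 'rV_m, lo * sqnorm v <= (v *m P *m v^T) 0 0.
Proof.
move=> P_sym P_ev v.
have NP_sym : (- P)^T = - P by rewrite linearN /= P_sym.
have NP_ev a : eigenvalue (- P) a -> a <= - lo.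
  case/eigenvalueP => u uP u_neq0; rewrite lerNr; apply: P_ev.
  by apply/eigenvalueP; exists u; rewrite // scaleNr -uP mulmxN opprK.
by have := rayleigh_le NP_sym NP_ev v; rewrite mulmxN mulNmx mxE mulNr lerN2.
Qed.

End Rayleigh.

Section WeightedGram.
Variable R : realFieldType.

Definition wgram m n (A : 'M[R]_(m, n)) (d : 'rV[R]_n) : 'M[R]_m :=
  A *m diag_mx d *m A^T.

Lemma trmx_wgram m n (A : 'M[R]_(m, n)) d : (wgram A d)^T = wgram A d.
Proof. by rewrite /wgram !trmx_mul trmxK tr_diag_mx mulmxA. Qed.

Lemma wgramB m n (A : 'M[R]_(m, n)) d1 d2 :
  wgram A d1 - wgram A d2 = wgram A (d1 - d2).
Proof. by rewrite /wgram linearB /= mulmxBr mulmxBl. Qed.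

Lemma wgram_formE m n (A : 'M[R]_(m, n)) d (p q : 'rV_m) :
  p *m wgram A d *m q^T = p *m A *m diag_mx d *m (q *m A)^T.
Proof. by rewrite /wgram trmx_mul !mulmxA. Qed.

End WeightedGram.

Lemma invmxB (R : comUnitRingType) n (X Y : 'M[R]_n) :
  X \in unitmx -> Y \in unitmx ->
  invmx X - invmx Y = invmx X *m (Y - X) *m invmx Y.
Proof.
move=> X_unit Y_unit.
by rewrite mulmxBr mulmxBl mulmxK // mulVmx // mul1mx.
Qed.

Section DiagonalScaling.
Variable R : realType.

Lemma diagv_mul_diagv n (x : 'cV[R]_n) : diagv x *m diagv x = diag_mx (sqv x)^T.
Proof. by rewrite /diagv mulmx_diag; congr diag_mx; apply/rowP => j; rewrite !mxE. Qed.

Lemma diagv_wgram m n (A : 'M[R]_(m, n)) x :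
  A *m diagv x *m diagv x *m A^T = wgram A (sqv x)^T.
Proof. by rewrite -[A *m _ *m diagv x]mulmxA diagv_mul_diagv. Qed.

Lemma Sigma_wgram m n (A : 'M[R]_(m, n)) x : Sigma A x = invmx (wgram A (sqv x)^T).
Proof. by rewrite /Sigma diagv_wgram. Qed.

Lemma trmx_diagv n (x : 'cV[R]_n) : (diagv x)^T = diagv x.
Proof. exact: tr_diag_mx. Qed.

Lemma inftynorm_ge n (x : 'cV[R]_n) i : `|x i 0| <= inftynorm x.
Proof. exact: (le_bigmax 0 (fun i => `|x i 0|)). Qed.

Lemma inftynorm_ge0 n (x : 'cV[R]_n) : 0 <= inftynorm x.
Proof.
by apply: (big_ind (fun y : R => 0 <= y)) => // a b a_ge0 _; rewrite le_max a_ge0.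
Qed.

Lemma sqv_bounded n (x : 'cV[R]_n) (lo hi : R) : 0 <= lo ->
  (forall i, lo <= x i 0 <= hi) -> forall j, lo ^+ 2 <= (sqv x)^T 0 j <= hi ^+ 2.
Proof.
move=> lo_ge0 x_bd j; have /andP[lo_le le_hi] := x_bd j.
by rewrite !mxE; apply/andP; split; nra.
Qed.

End DiagonalScaling.

Section PerturbationBound.
Variables (R : realType) (m n : nat) (A : 'M[R]_(m, n)) (xmin xmax lmin lmax : R).
Hypotheses (AAT_unit : A *m A^T \in unitmx) (xmin_gt0 : 0 < xmin)
  (lmaxP : is_lmax (A *m A^T) lmax) (lminP : is_lmin (A *m A^T) lmin).

Local Notation bounded x := (forall i, xmin <= x i 0 <= xmax).

Let AAT_sym : (A *m A^T)^T = A *m A^T.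
Proof. by rewrite trmx_mul trmxK. Qed.

Lemma sqnorm_mulA_le p : sqnorm (p *m A) <= lmax * sqnorm p.
Proof. by rewrite sqnorm_mulmx; exact: rayleigh_le AAT_sym lmaxP.2 p. Qed.

Lemma sqnorm_mulA_ge p : lmin * sqnorm p <= sqnorm (p *m A).
Proof. by rewrite sqnorm_mulmx; exact: rayleigh_ge AAT_sym lminP.2 p. Qed.

Lemma lmin_gt0 : 0 < lmin.
Proof.
have [v vAAT v_neq0] := eigenvalueP lminP.1.
have lmin_neq0 : lmin != 0.
  apply: contra_neq v_neq0 => lmin0; apply/eqP.
  rewrite -(mulmx_free_eq0 _ (_ : row_free (A *m A^T))) ?row_free_unit //.
  by rewrite vAAT lmin0 scale0r.
have lmin_ge0 : 0 <= lmin.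
  have := sqnorm_ge0 (v *m A).
  by rewrite sqnorm_mulmx vAAT -scalemxAl mxE pmulr_lge0 ?sqnorm_gt0.
by rewrite lt_def lmin_neq0.
Qed.

Lemma lmax_gt0 : 0 < lmax.
Proof. exact: lt_le_trans lmin_gt0 (lmaxP.2 _ lminP.1). Qed.

Lemma sqnorm_mulAT_le z : sqnorm (z *m A^T) <= lmax * sqnorm z.
Proof. exact: sqnorm_mul_trmx_le lmax_gt0 sqnorm_mulA_le z. Qed.

Let k := xmin ^+ 2 * lmin.

Let k_gt0 : 0 < k.
Proof. by rewrite mulr_gt0 ?exprn_gt0 ?lmin_gt0. Qed.

Let scale_ge0 (d : 'cV[R]_n) : 0 <= inftynorm d * lmax / k ^+ 2.
Proof.
by apply: divr_ge0; [exact: mulr_ge0 (inftynorm_ge0 d) (ltW lmax_gt0) | exact: sqr_ge0].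
Qed.

Lemma wgram_sqv_ge (x : 'cV[R]_n) : bounded x ->
  forall p, k * sqnorm p <= (p *m wgram A (sqv x)^T *m p^T) 0 0.
Proof.
move=> x_bd p; rewrite wgram_formE /k -mulrA.
apply: le_trans (_ : xmin ^+ 2 * sqnorm (p *m A) <= _).
  by rewrite ler_wpM2l ?sqr_ge0 ?sqnorm_mulA_ge.
by apply: diag_form_ge => j; have /andP[] := sqv_bounded (ltW xmin_gt0) x_bd j.
Qed.

Lemma wgram_sqv_le (x : 'cV[R]_n) : bounded x ->
  forall p, (p *m wgram A (sqv x)^T *m p^T) 0 0 <= xmax ^+ 2 * lmax * sqnorm p.
Proof.
move=> x_bd p; rewrite wgram_formE -mulrA.
apply: le_trans (_ : xmax ^+ 2 * sqnorm (p *m A) <= _).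
  by apply: diag_form_le => j; have /andP[] := sqv_bounded (ltW xmin_gt0) x_bd j.
by rewrite ler_wpM2l ?sqr_ge0 ?sqnorm_mulA_le.
Qed.

Lemma sqnorm_mulA_Sigma_le (x : 'cV[R]_n) : bounded x ->
  forall u, sqnorm (u *m Sigma A x *m A) <= lmax * (sqnorm u / k ^+ 2).
Proof.
move=> x_bd u; apply: le_trans (sqnorm_mulA_le _) _.
rewrite ler_wpM2l ?(ltW lmax_gt0) // Sigma_wgram.
exact: sqnorm_mul_invmx_le k_gt0 (wgram_sqv_ge x_bd) u.
Qed.

Lemma Sigma_sub_form_le (xh xt : 'cV[R]_n) : bounded xh -> bounded xt -> forall u,
  `|(u *m (Sigma A xh - Sigma A xt) *m u^T) 0 0|
    <= inftynorm (sqv xh - sqv xt) * lmax / k ^+ 2 * sqnorm u.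
Proof.
move=> xh_bd xt_bd u; set d := (sqv xt - sqv xh)^T.
have unit_wgram (x : 'cV[R]_n) : bounded x -> wgram A (sqv x)^T \in unitmx.
  by move=> x_bd; exact: coercive_unitmx k_gt0 (wgram_sqv_ge x_bd).
have Sigma_subE : Sigma A xh - Sigma A xt = Sigma A xh *m wgram A d *m Sigma A xt.
  by rewrite !Sigma_wgram invmxB ?unit_wgram // wgramB /d linearB.
have Sigma_sym : (Sigma A xt)^T = Sigma A xt.
  by rewrite Sigma_wgram trmx_inv trmx_wgram.
have d_le j : `|d 0 j| <= inftynorm (sqv xh - sqv xt).
  by apply: le_trans (inftynorm_ge _ j); rewrite !mxE distrC.
have formE : u *m (Sigma A xh *m wgram A d *m Sigma A xt) *m u^T
    = u *m Sigma A xh *m wgram A d *m (u *m Sigma A xt)^T.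
  by rewrite trmx_mul Sigma_sym !mulmxA.
rewrite Sigma_subE formE wgram_formE.
apply: le_trans (diag_form_norm_le _ _ d_le) _.
set dl := inftynorm _; set s := lmax * (sqnorm u / k ^+ 2).
have -> : dl * lmax / k ^+ 2 * sqnorm u = dl / 2 * (s + s).
  by rewrite /s; field; rewrite gt_eqF.
apply: ler_wpM2l; first by rewrite divr_ge0 ?inftynorm_ge0.
by apply: lerD; exact: sqnorm_mulA_Sigma_le.
Qed.

Lemma eigenvalue_Sigma_sub_le (xo xh xt : 'cV[R]_n) (S : 'M[R]_m) lam :
  bounded xo -> bounded xh -> bounded xt ->
  S^T = S -> S *m S = A *m diagv xo *m diagv xo *m A^T ->
  eigenvalue (S *m (Sigma A xh - Sigma A xt) *m S) lam ->
  `|lam| <= inftynorm (sqv xh - sqv xt) * lmax / k ^+ 2 * (xmax ^+ 2 * lmax).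
Proof.
move=> xo_bd xh_bd xt_bd S_sym SS /eigenvalueP[v]; rewrite !mulmxA => vE v_neq0.
set u := v *m S.
have formE : lam * sqnorm v = (u *m (Sigma A xh - Sigma A xt) *m u^T) 0 0.
  by rewrite /u trmx_mul S_sym !mulmxA vE -scalemxAl mxE.
have u_le : sqnorm u <= xmax ^+ 2 * lmax * sqnorm v.
  by rewrite /sqnorm /u trmx_mul S_sym mulmxA -(mulmxA v) SS diagv_wgram wgram_sqv_le.
rewrite -(ler_pM2r (sqnorm_gt0 v_neq0)) -(ger0_norm (sqnorm_ge0 v)) -normrM formE.
apply: le_trans (Sigma_sub_form_le xh_bd xt_bd u) _.
rewrite ger0_norm ?sqnorm_ge0 // -[_ * (xmax ^+ 2 * lmax) * _]mulrA.
by apply: ler_wpM2l; first exact: scale_ge0.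
Qed.

Lemma qform_Sigma_sub_le (xo xh xt w : 'cV[R]_n) :
  bounded xo -> bounded xh -> bounded xt ->
  `|qform (Sigma A xh - Sigma A xt) (A *m diagv xo *m w)|
    <= inftynorm (sqv xh - sqv xt) * lmax / k ^+ 2 * (xmax ^+ 2 * lmax)
       * (w^T *m w) 0 0.
Proof.
move=> xo_bd xh_bd xt_bd; set z := w^T *m diagv xo.
have yE : (A *m diagv xo *m w)^T = z *m A^T by rewrite !trmx_mul trmx_diagv mulmxA.
have z_le : sqnorm z <= xmax ^+ 2 * sqnorm w^T.
  rewrite [sqnorm z]/sqnorm /z trmx_mul trmx_diagv mulmxA -(mulmxA w^T) diagv_mul_diagv.
  have /(diag_form_le w^T) : forall j, (sqv xo)^T 0 j <= xmax ^+ 2.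
    by move=> j; have /andP[] := sqv_bounded (ltW xmin_gt0) xo_bd j.
  by rewrite trmxK.
have -> : qform (Sigma A xh - Sigma A xt) (A *m diagv xo *m w)
    = ((z *m A^T) *m (Sigma A xh - Sigma A xt) *m (z *m A^T)^T) 0 0.
  by rewrite -yE trmxK.
apply: le_trans (Sigma_sub_form_le xh_bd xt_bd _) _.
have -> : (w^T *m w) 0 0 = sqnorm w^T by rewrite /sqnorm trmxK.
rewrite -[_ * (xmax ^+ 2 * lmax) * _]mulrA.
apply: ler_wpM2l; first exact: scale_ge0.
apply: le_trans (sqnorm_mulAT_le z) _.
rewrite [xmax ^+ 2 * lmax]mulrC -mulrA.
by apply: ler_wpM2l; first exact: ltW lmax_gt0.
Qed.

End PerturbationBound.

Theorem lemma7 (R : realType) (m n : nat) (A : 'M[R]_(m, n))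
  (xmin xmax lmax lmin : R) (xo xh xt : 'cV[R]_n) :
  A *m A^T \in unitmx ->
  0 < xmin -> xmin <= xmax ->
  (forall i, xmin <= xo i 0 <= xmax) ->
  (forall i, xmin <= xh i 0 <= xmax) ->
  (forall i, xmin <= xt i 0 <= xmax) ->
  is_lmax (A *m A^T) lmax -> is_lmin (A *m A^T) lmin ->
  let bound := xmax ^+ 2 * lmax ^+ 2 * inftynorm (sqv xh - sqv xt)
               / (xmin ^+ 4 * lmin ^+ 2) in
  (forall S : 'M[R]_m,
     S^T = S -> psd S -> S *m S = A *m diagv xo *m diagv xo *m A^T ->
     forall lam : R, eigenvalue (S *m (Sigma A xh - Sigma A xt) *m S) lam ->
       `|lam| <= bound) /\
  (forall (sigw : R) (L : nat) (w : 'I_L -> 'cV[R]_n),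
     0 < sigw -> (0 < L)%N ->
     `| (L%:R * sigw ^+ 2)^-1 *
        \sum_(l < L) qform (Sigma A xh - Sigma A xt) (A *m diagv xo *m w l) |
     <= bound * (1 + (L%:R * sigw ^+ 2)^-1 * \sum_(l < L) ((w l)^T *m w l) 0 0)).
Proof.
move=> AAT_unit xmin_gt0 _ xo_bd xh_bd xt_bd lmaxP lminP bound.
have boundE : bound = inftynorm (sqv xh - sqv xt) * lmax / (xmin ^+ 2 * lmin) ^+ 2
                      * (xmax ^+ 2 * lmax).
  by rewrite /bound; field; rewrite !gt_eqF ?(lmin_gt0 AAT_unit lminP).
split=> [S S_sym _ SS lam|sigw L w sigw_gt0 L_gt0].
  rewrite boundE; exact (eigenvalue_Sigma_sub_le AAT_unit xmin_gt0 lmaxP lminP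
                                                xo_bd xh_bd xt_bd S_sym SS).
have bound_ge0 : 0 <= bound.
  rewrite /bound; apply: divr_ge0.
    by apply: mulr_ge0; [apply: mulr_ge0; exact: sqr_ge0 | exact: inftynorm_ge0].
  by apply: mulr_ge0; [exact: exprn_ge0 (ltW xmin_gt0) | exact: sqr_ge0].
set c := (L%:R * sigw ^+ 2)^-1.
have c_gt0 : 0 < c by rewrite invr_gt0 mulr_gt0 ?exprn_gt0 ?ltr0n.
rewrite normrM gtr0_norm // mulrDr mulr1 mulrCA.
apply: ler_wpDl => //; apply: ler_wpM2l; first exact: ltW.
rewrite mulr_sumr; apply: le_trans (ler_norm_sum _ _ _) _; apply: ler_sum => l _.
rewrite boundE.
exact (qform_Sigma_sub_le AAT_unit xmin_gt0 lmaxP lminP (w l) xo_bd xh_bd xt_bd).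
Qed.
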